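(* Let $[X,d,m]$ be a metric random walk space with invariant and reversible measure $\nu$ under the standing assumptions below, and let $\Omega\subset X$ be a bounded $\nu$-measurable set with $0<\nu(\Omega)<\nu(X)$. Suppose $u_n\in BV_m(X)$, $n\in\mathbb{N}$, are $m$-least gradient functions in $\Omega$ and $u_n\to u$ in $L^1(X,\nu)$, where $u\in BV_m(X)$. Then $u$ is an $m$-least gradient function in $\Omega$.
   Context: A metric random walk space $[X,d,m]$ is a Polish metric space $(X,d)$ with a family $m=(m_x)_{x\in X}$ of Borel probability measures such that $x\mapsto m_x(A)$ is Borel measurable for every Borel $A$ and each $m_x$ has finite first moment. $\nu$ is invariant: $\nu(A)=\int_X m_x(A)\,d\nu(x)$ for all $\nu$-measurable $A$; reversible: $dm_x(y)\,d\nu(x)=dm_y(x)\,d\nu(y)$. Standing assumptions: $(X,d,\nu)$ is $\sigma$-finite, $\nu(X)<\infty$, $\nu$ ergodic (every Borel $B$ with $m_x(B)=1$ for all $x\in B$ has $\nu(B)\in\{0,\nu(X)\}$). $BV_m(X)$ is the set of $\nu$-measurable $u:X\to\mathbb{R}$ with $\int_X\int_X|u(y)-u(x)|\,dm_x(y)\,d\nu(x)<\infty$, and $TV_m(u):=\frac12\int_X\int_X|u(y)-u(x)|\,dm_x(y)\,d\nu(x)$. A function $u\in BV_m(X)$ is an $m$-least gradient function in $\Omega$ if $TV_m(u)\le TV_m(u+g)$ for every $g\in BV_m(X)$ with $g=0$ $\nu$-a.e. on $X\setminus\Omega$. *)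

From mathcomp Require Import all_boot all_order all_algebra.
From mathcomp Require Import all_classical all_reals all_analysis measurable_realfun.
Set Implicit Arguments. Unset Strict Implicit. Unset Printing Implicit Defensive.
Import Order.TTheory GRing.Theory Num.Theory.
Import numFieldTopology.Exports numFieldNormedType.Exports.
Local Open Scope classical_set_scope.
Local Open Scope ring_scope.

Section MRW.
Context {R : realType} {d : measure_display} {X : measurableType d}.

Definition is_metric (dist : X -> X -> R) : Prop :=
  [/\ forall x y, 0 <= dist x y,
      forall x y, dist x y = 0 <-> x = y,
      forall x y, dist x y = dist y x &
      forall x y z, dist x z <= dist x y + dist y z].

Definition dopen (dist : X -> X -> R) : set (set X) :=
  [set A | forall x, A x -> exists2 r : R, 0 < r & [set y | dist x y < r] `<=` A].

Definition dcauchy (dist : X -> X -> R) (s : nat -> X) : Prop :=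
  forall e : R, 0 < e -> exists N, forall p q, (N <= p)%N -> (N <= q)%N -> dist (s p) (s q) < e.

Definition dconverges (dist : X -> X -> R) (s : nat -> X) (x : X) : Prop :=
  forall e : R, 0 < e -> exists N, forall p, (N <= p)%N -> dist (s p) x < e.

Definition polish (dist : X -> X -> R) : Prop :=
  [/\ is_metric dist,
      (forall s, dcauchy dist s -> exists x, dconverges dist s x) &
      exists D : set X, countable D /\
        forall x (e : R), 0 < e -> exists2 y, D y & dist x y < e].

Definition borel_of (dist : X -> X -> R) : Prop :=
  (@measurable d X) = <<s dopen dist >>.

Definition dbounded (dist : X -> X -> R) (A : set X) : Prop :=
  exists x0 (r : R), forall x, A x -> dist x0 x <= r.

Definition mrw_space (dist : X -> X -> R) (m : X -> probability X R)
  (nu : {measure set X -> \bar R}) : Prop :=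
  polish dist /\ borel_of dist /\
      (forall A, measurable A -> measurable_fun [set: X] (fun x => (m x A : \bar R))) /\
      (forall x, (\int[m x]_y (dist x y)%:E < +oo)%E) /\
      (forall A, measurable A -> (nu A = \int[nu]_x m x A)%E) /\
      (* reversibility: dm_x(y) dnu(x) = dm_y(x) dnu(y) as measures on X x X *)
      (forall A B, measurable A -> measurable B ->
         (\int[nu]_(x in A) m x B = \int[nu]_(x in B) m x A)%E) /\
      (nu setT < +oo)%E /\
      (forall B, measurable B -> (forall x, B x -> m x B = 1%E) ->
         nu B = 0%E \/ nu B = nu setT).

Definition Jm (m : X -> probability X R) (nu : {measure set X -> \bar R})
  (u : X -> R) : \bar R :=
  (\int[nu]_x \int[m x]_y (`|u y - u x|)%:E)%E.

Definition BVm (m : X -> probability X R) (nu : {measure set X -> \bar R})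
  (u : X -> R) : Prop :=
  measurable_fun setT u /\ (Jm m nu u < +oo)%E.

Definition TVm (m : X -> probability X R) (nu : {measure set X -> \bar R})
  (u : X -> R) : \bar R := (Jm m nu u * 2^-1%:E)%E.

Definition least_gradient (m : X -> probability X R) (nu : {measure set X -> \bar R})
  (Omega : set X) (u : X -> R) : Prop :=
  BVm m nu u /\
  forall g : X -> R, BVm m nu g ->
    {ae nu, forall x, ~ Omega x -> g x = 0} ->
    (TVm m nu u <= TVm m nu (u \+ g)%R)%E.

End MRW.

From mathcomp Require Import all_boot all_order all_algebra.
From mathcomp Require Import all_classical all_reals all_analysis measurable_realfun.
From HB Require Import structures.
From mathcomp Require Import ring.
Import Order.TTheory GRing.Theory Num.Theory.
Import numFieldTopology.Exports numFieldNormedType.Exports.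
Local Open Scope classical_set_scope.
Local Open Scope ring_scope.

(** The pointwise bound [|v y - v x| <= |w y - w x| + |v y - w y| + |v x - w x|],
  integrated against [dm_x(y) dnu(x)], gives [Jm v <= Jm w + 2 ||v - w||_1]: by
  invariance of [nu], the middle term integrates to [||v - w||_1] as well.
  Hence [Jm u <= Jm u_n + 2 e_n <= Jm (u_n + g) + 2 e_n <= Jm (u + g) + 4 e_n] with
  [e_n = ||u_n - u||_1 -> 0], and [TVm = Jm / 2]. *)

Lemma lee_addcvg0r {R : realType} (a b : \bar R) (e : nat -> \bar R) :
  e @ \oo --> 0%E -> (forall n, a <= b + e n)%E -> (a <= b)%E.
Proof.
move=> /fine_cvgP[e_fin e_cvg] le_ab; apply/lee_addgt0Pr => eps eps0.
have [n [/= fin_en en_lt]] :=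
  filter_ex (filterI e_fin (cvgr0_norm_lt _ e_cvg eps eps0)).
apply: (le_trans (le_ab n)); rewrite leeD2l // -(fineK fin_en) lee_fin.
exact: le_trans (ler_norm _) (ltW en_lt).
Qed.

Lemma TVm_leE {R : realType} {d : measure_display} {X : measurableType d}
    (m : X -> probability X R) (nu : {measure set X -> \bar R}) (u v : X -> R) :
  (TVm m nu u <= TVm m nu v)%E = (Jm m nu u <= Jm m nu v)%E.
Proof. by rewrite lee_pmul2r // lte_fin invr_gt0. Qed.

Section invariant_random_walk.
Context {R : realType} {d : measure_display} {X : measurableType d}.
Local Open Scope ereal_scope.

Variable m : X -> probability X R.
Hypothesis measurable_m :
  forall A, measurable A -> measurable_fun [set: X] (fun x => m x A).

Definition walk (x : X) : {measure set X -> \bar R} := m x.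

Let measurable_walk U : measurable U -> measurable_fun [set: X] (walk ^~ U).
Proof. exact: measurable_m. Qed.

HB.instance Definition _ := isKernel.Build _ _ X X R walk measurable_walk.
HB.instance Definition _ :=
  Kernel_isProbability.Build _ _ X X R walk (fun x => probability_setT (m x)).

Definition walk_snd (p : X * X) : {measure set X -> \bar R} := m p.2.

Let measurable_walk_snd U :
  measurable U -> measurable_fun [set: X * X] (fun p => m p.2 U).
Proof. by move=> mU; exact: measurableT_comp (measurable_m _ mU) measurable_snd. Qed.

HB.instance Definition _ :=
  isKernel.Build _ _ (X * X)%type X R walk_snd measurable_walk_snd.
HB.instance Definition _ := Kernel_isProbability.Build _ _ (X * X)%type X R
  walk_snd (fun p => probability_setT (m p.2)).

Lemma measurable_fun_integral_walk (F : X * X -> \bar R) :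
  (forall z, 0 <= F z) -> measurable_fun [set: X * X] F ->
  measurable_fun [set: X] (fun x => \int[m x]_y F (x, y)).
Proof. by move=> F0 mF; exact: (measurable_kfcomp walk mF F0). Qed.

Definition local_variation (v : X -> R) (x : X) : \bar R :=
  \int[m x]_y (`|v y - v x|)%:E.

Lemma measurable_local_variation (v : X -> R) :
  measurable_fun [set: X] v -> measurable_fun [set: X] (local_variation v).
Proof.
move=> mv; apply: (measurable_fun_integral_walk (fun p => (`|v p.2 - v p.1|)%:E)).
  by move=> p; rewrite lee_fin.
apply/measurable_EFinP; apply: measurableT_comp => //; apply: measurable_funB.
  exact: measurableT_comp mv measurable_snd.
exact: measurableT_comp mv measurable_fst.
Qed.

Lemma local_variation_le (v w : X -> R) (x : X) :
  measurable_fun [set: X] v -> measurable_fun [set: X] w ->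
  local_variation v x <=
    local_variation w x + \int[m x]_y (`|v y - w y|)%:E + (`|v x - w x|)%:E.
Proof.
move=> mv mw.
have mabsB (f : X -> R) c : measurable_fun [set: X] f ->
    measurable_fun [set: X] (fun y => (`|f y - c|)%:E).
  move=> mf; apply/measurable_EFinP; apply: measurableT_comp => //.
  exact: measurable_funB.
have mvw : measurable_fun [set: X] (fun y => (`|v y - w y|)%:E).
  by apply/measurable_EFinP; apply: measurableT_comp => //; exact: measurable_funB.
have -> : (`|v x - w x|)%:E = \int[m x]_y (`|v x - w x|)%:E.
  by rewrite integral_cst // [X in _ * X](probability_setT (m x)) mule1.
rewrite /local_variation -!ge0_integralD //; last 3 first.
- by move=> y _; rewrite adde_ge0.
- by apply: emeasurable_funD => //; exact: mabsB.
- exact: mabsB.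
apply: ge0_le_integral => //.
- exact: mabsB.
- by apply: emeasurable_funD => //; apply: emeasurable_funD => //; exact: mabsB.
move=> y _; rewrite -!EFinD lee_fin.
rewrite (_ : v y - v x = (w y - w x) + (v y - w y) - (v x - w x))%R; last by ring.
by rewrite (le_trans (ler_normB _ _)) // lerD // ler_normD.
Qed.

Variable nu : {measure set X -> \bar R}.
Hypothesis nu_finite : nu setT < +oo.
Hypothesis nu_invariant : forall A, measurable A -> nu A = \int[nu]_x m x A.

Definition cst_nu (x : X) : {measure set X -> \bar R} := nu.

Let measurable_cst_nu U : measurable U -> measurable_fun [set: X] (cst_nu ^~ U).
Proof. by move=> _; exact: measurable_cst. Qed.

Let cst_nu_uub : measure_fam_uub cst_nu.
Proof.
have nuT : nu setT \is a fin_num by rewrite ge0_fin_numE.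
by exists (fine (nu setT) + 1)%R => x; rewrite -(fineK nuT) lte_fin ltrDl.
Qed.

HB.instance Definition _ := isKernel.Build _ _ X X R cst_nu measurable_cst_nu.
HB.instance Definition _ := Kernel_isFinite.Build _ _ X X R cst_nu cst_nu_uub.

Lemma integral_invariant (f : X -> \bar R) :
  (forall x, 0 <= f x) -> measurable_fun [set: X] f ->
  \int[nu]_x \int[m x]_y f y = \int[nu]_x f x.
Proof.
move=> f0 mf.
have := integral_kcomp (cst_nu : R.-sfker X ~> X) walk_snd point f0 mf.
(* [kcomp cst_nu walk_snd point] is [A |-> \int[nu]_x m x A], i.e. [nu]. *)
move=> <-; apply: eq_measure_integral => A mA _.
by rewrite nu_invariant.
Qed.

Lemma Jm_le_add_L1 (v w : X -> R) :
  measurable_fun [set: X] v -> measurable_fun [set: X] w ->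
  Jm m nu v <= Jm m nu w +
    (\int[nu]_x (`|v x - w x|)%:E + \int[nu]_x (`|v x - w x|)%:E).
Proof.
move=> mv mw.
have mvw : measurable_fun [set: X] (fun y => `|v y - w y|%R).
  by apply: measurableT_comp => //; exact: measurable_funB.
have mwalk_vw : measurable_fun [set: X] (fun x => \int[m x]_y (`|v y - w y|)%:E).
  apply: (measurable_fun_integral_walk (fun p => (`|v p.2 - w p.2|)%:E)) => //.
  by apply/measurable_EFinP; exact: measurableT_comp mvw measurable_snd.
have mlw := measurable_local_variation _ mw.
apply: (@le_trans _ _ (\int[nu]_x (local_variation w x +
    \int[m x]_y (`|v y - w y|)%:E + (`|v x - w x|)%:E))).
  apply: ge0_le_integral => //.
  - by move=> x _; exact: integral_ge0.
  - exact: measurable_local_variation.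
  - by apply: emeasurable_funD; [exact: emeasurable_funD | exact/measurable_EFinP].
  - by move=> x _; exact: local_variation_le.
rewrite ge0_integralD //; last 3 first.
- by move=> x _; rewrite adde_ge0 // integral_ge0.
- exact: emeasurable_funD.
- exact/measurable_EFinP.
rewrite ge0_integralD //; last 2 first.
- by move=> x _; exact: integral_ge0.
- by move=> x _; exact: integral_ge0.
by rewrite integral_invariant -?addeA //; exact/measurable_EFinP.
Qed.

Lemma Jm_le_of_cvg (v_ w_ : nat -> X -> R) (v w : X -> R) :
  (forall n, measurable_fun [set: X] (v_ n)) ->
  (forall n, measurable_fun [set: X] (w_ n)) ->
  measurable_fun [set: X] v -> measurable_fun [set: X] w ->
  (fun n => \int[nu]_x (`|v_ n x - v x|)%:E) @ \oo --> 0 ->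
  (fun n => \int[nu]_x (`|w_ n x - w x|)%:E) @ \oo --> 0 ->
  (forall n, Jm m nu (v_ n) <= Jm m nu (w_ n)) ->
  Jm m nu v <= Jm m nu w.
Proof.
move=> mv_ mw_ mv mw v_cvg w_cvg le_vw.
set a := fun n => _ in v_cvg; set b := fun n => _ in w_cvg.
have cvg0D (f g : nat -> \bar R) : f @ \oo --> 0 -> g @ \oo --> 0 ->
    (fun n => f n + g n) @ \oo --> 0.
  by move=> f0 g0; rewrite -(adde0 0); exact: cvgeD.
apply: (@lee_addcvg0r _ _ _ (fun n => (a n + a n) + (b n + b n))).
  exact: cvg0D (cvg0D _ _ v_cvg v_cvg) (cvg0D _ _ w_cvg w_cvg).
move=> n.
have a_sym : a n = \int[nu]_x (`|v x - v_ n x|)%:E.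
  by apply: eq_integral => x _; rewrite distrC.
apply: (le_trans (Jm_le_add_L1 _ _ mv (mv_ n))).
rewrite -a_sym [leRHS]addeCA [leLHS]addeC; apply: leeD; first exact: lexx.
exact: le_trans (le_vw n) (Jm_le_add_L1 _ _ (mw_ n) mw).
Qed.

End invariant_random_walk.

Theorem mainTheorem2 (R : realType) (d : measure_display) (X : measurableType d)
  (dist : X -> X -> R) (m : X -> probability X R) (nu : {measure set X -> \bar R})
  (Omega : set X) (u_ : nat -> X -> R) (u : X -> R) :
  mrw_space dist m nu ->
  measurable Omega -> dbounded dist Omega ->
  (0 < nu Omega)%E -> (nu Omega < nu setT)%E ->
  (forall n, least_gradient m nu Omega (u_ n)) ->
  (forall n, nu.-integrable setT (EFin \o u_ n)) ->
  nu.-integrable setT (EFin \o u) ->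
  (fun n => \int[nu]_x (`|u_ n x - u x|)%:E)%E @ \oo --> 0%E ->
  BVm m nu u ->
  least_gradient m nu Omega u.
Proof.
move=> [_ [_ [measurable_m [_ [nu_invariant [_ [nu_finite _]]]]]]] _ _ _ _
  lg_u_ _ _ u_cvg BV_u.
split=> // g BV_g g_out; rewrite TVm_leE.
have mu_ n : measurable_fun [set: X] (u_ n) := (lg_u_ n).1.1.
apply: (Jm_le_of_cvg _ measurable_m _ nu_finite nu_invariant u_
  (fun n => u_ n \+ g)) => //.
- by move=> n; exact: measurable_funD (mu_ n) BV_g.1.
- exact: BV_u.1.
- exact: measurable_funD BV_u.1 BV_g.1.
- rewrite (eq_cvg _ _ (g := fun n => \int[nu]_x (`|u_ n x - u x|)%:E)%E) //.
  by move=> n; apply: eq_integral => x _ /=; congr ((`|_|)%:E); ring.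
- by move=> n; rewrite -TVm_leE; exact: (lg_u_ n).2.
Qed.
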